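(* (5) $\overline{\mathcal{H}_{\mbox{s-conv}}(S^n)}\subset\mathcal{H}^\circ(S^n)$; (6) $\bigcirc(\mathcal{H}_{\mbox{s-conv}}(S^n))\neq\mathcal{H}_{\mbox{s-conv}}(S^n)$; (7) $\bigcirc(\overline{\mathcal{H}_{\mbox{s-conv}}(S^n)})=\overline{\mathcal{H}_{\mbox{s-conv}}(S^n)}$; (8) the restriction of $\bigcirc$ to $\overline{\mathcal{H}_{\mbox{s-conv}}(S^n)}$ is injective. Here $\bigcirc(W)=W^\circ$.
   Context: $S^n$ is the unit sphere in $\mathbb{R}^{n+1}$, $n\ge1$; $|PQ|=\arccos(P\cdot Q)$. $H(P)=\{Q\in S^n:P\cdot Q\ge0\}$ and $W^\circ=\bigcap_{P\in W}H(P)$. $\mathcal{H}(S^n)$ is the set of non-empty closed subsets of $S^n$ with the Pompeiu-Hausdorff metric $h(A,B)=\max\{\max_{x\in A}\min_{y\in B}|xy|,\ \max_{y\in B}\min_{x\in A}|xy|\}$, and $\mathcal{H}^\circ(S^n)=\{W\in\mathcal{H}(S^n):W^\circ\ne\emptyset\}$. A subset is hemispherical if it is disjoint from $H(P)$ for some $P\in S^n$. For $A,B$ in a hemispherical set, the arc $AB=\{((1-t)A+tB)/\|(1-t)A+tB\|:0\le t\le1\}$; a hemispherical set $W$ is spherical convex if $AB\subset W$ for all $A,B\in W$. $\mathcal{H}_{\mbox{s-conv}}(S^n)$ is the set of non-empty closed spherical convex subsets of $S^n$, and $\overline{\mathcal{H}_{\mbox{s-conv}}(S^n)}$ is its closure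 in $(\mathcal{H}(S^n),h)$. *)

From Stdlib Require Import Reals Lra.
Open Scope R_scope.

(* Points of R^{n+1} are functions nat -> R; only coordinates 0..n matter,
   and points of S^n are required to vanish beyond index n. *)
Definition Pt := nat -> R.

Definition dot (n : nat) (x y : Pt) : R := sum_f_R0 (fun i => x i * y i) n.

Definition sphere (n : nat) (x : Pt) : Prop :=
  (forall i, (n < i)%nat -> x i = 0) /\ dot n x x = 1.

Definition sdist (n : nat) (P Q : Pt) : R := acos (dot n P Q).

Definition Hemi (n : nat) (P : Pt) (Q : Pt) : Prop := sphere n Q /\ dot n P Q >= 0.

Definition polar (n : nat) (W : Pt -> Prop) (Q : Pt) : Prop :=
  sphere n Q /\ forall P, W P -> dot n P Q >= 0.

Definition closed_in_sphere (n : nat) (W : Pt -> Prop) : Prop :=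
  forall x, sphere n x ->
    (forall eps, eps > 0 -> exists y, W y /\ sdist n x y < eps) -> W x.

Definition HS (n : nat) (W : Pt -> Prop) : Prop :=
  (forall x, W x -> sphere n x) /\ (exists x, W x) /\ closed_in_sphere n W.

Definition Hcirc (n : nat) (W : Pt -> Prop) : Prop :=
  HS n W /\ exists Q, polar n W Q.

(* Pompeiu-Hausdorff distance, literally as max over A of min over B, etc.
   hdist n A B r  means  h(A,B) = r  (max / min are attained on compact sets). *)
Definition mindist (n : nat) (x : Pt) (B : Pt -> Prop) (r : R) : Prop :=
  (exists b, B b /\ sdist n x b = r) /\ (forall b, B b -> r <= sdist n x b).

Definition excess (n : nat) (A B : Pt -> Prop) (r : R) : Prop :=
  (exists a, A a /\ mindist n a B r) /\
  (forall a r', A a -> mindist n a B r' -> r' <= r).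

Definition hdist (n : nat) (A B : Pt -> Prop) (r : R) : Prop :=
  exists r1 r2, excess n A B r1 /\ excess n B A r2 /\ r = Rmax r1 r2.

Definition hclosure (n : nat) (F : (Pt -> Prop) -> Prop) (W : Pt -> Prop) : Prop :=
  HS n W /\
  forall eps, eps > 0 -> exists V r, F V /\ hdist n W V r /\ r < eps.

Definition hemispherical (n : nat) (W : Pt -> Prop) : Prop :=
  exists P, sphere n P /\ forall Q, W Q -> ~ Hemi n P Q.

Definition arc_pt (n : nat) (A B : Pt) (t : R) : Pt :=
  let v := fun i => (1 - t) * A i + t * B i in
  fun i => v i / sqrt (dot n v v).

Definition s_convex (n : nat) (W : Pt -> Prop) : Prop :=
  hemispherical n W /\
  forall A B t, W A -> W B -> 0 <= t <= 1 -> W (arc_pt n A B t).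

Definition Hsconv (n : nat) (W : Pt -> Prop) : Prop := HS n W /\ s_convex n W.

Definition polar_image (n : nat) (F : (Pt -> Prop) -> Prop) (W : Pt -> Prop) : Prop :=
  exists V, F V /\ W = polar n V.

From Stdlib Require Import Reals Lra Psatz Classical ClassicalEpsilon
  FunctionalExtensionality PropExtensionality Rtopology.
Open Scope R_scope.

(* A set W in the closure of the spherical convex sets is closed, contains the arc
   between any two of its non-antipodal points (arcs pass to Hausdorff limits), and is
   not centrally symmetric (an s-convex set has a point far from the antipodes of all its
   points, which survives small Hausdorff perturbations). For such W, maximizing x.w over
   w in W and moving along arcs separates every x outside W from W by some q in W°; hence
   W° is non-empty and W°° = W, which gives (5) and (8). For (7), W° is approximated in the
   Hausdorff metric by the s-convex caps {z in W° | v.z >= delta} with v in W, -v not in W.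
   For (6), the polar of a single point is a closed hemisphere, which is not hemispherical. *)

Definition vadd (x y : Pt) : Pt := fun i => x i + y i.
Definition vsub (x y : Pt) : Pt := fun i => x i - y i.
Definition vscal (a : R) (x : Pt) : Pt := fun i => a * x i.
Definition vopp (x : Pt) : Pt := fun i => - x i.
Definition lin (a : R) (x : Pt) (b : R) (y : Pt) : Pt := fun i => a * x i + b * y i.

Definition vnorm (n : nat) (x : Pt) : R := sqrt (dot n x x).
Definition chord (n : nat) (x y : Pt) : R := vnorm n (vsub x y).

Definition supported (n : nat) (x : Pt) : Prop := forall i, (n < i)%nat -> x i = 0.

Definition normalize (n : nat) (v : Pt) : Pt := fun i => v i / sqrt (dot n v v).

Definition unitv (k : nat) : Pt := fun i => if Nat.eqb i k then 1 else 0.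

Ltac dot_induction :=
  unfold dot, vadd, vsub, vscal, vopp, lin in *;
  match goal with |- context [sum_f_R0 _ ?k] =>
    induction k as [|? IH]; simpl; [ring | rewrite IH; ring] end.

Ltac vector_ext :=
  apply functional_extensionality; intro; unfold vadd, vsub, vscal, vopp, lin; field.

Lemma dot_sym n x y : dot n x y = dot n y x.
Proof. dot_induction. Qed.
Lemma dot_lin_l n a x b y z : dot n (lin a x b y) z = a * dot n x z + b * dot n y z.
Proof. dot_induction. Qed.
Lemma dot_lin_r n a x b y z : dot n z (lin a x b y) = a * dot n z x + b * dot n z y.
Proof. dot_induction. Qed.
Lemma dot_sub_r n x y z : dot n z (vsub x y) = dot n z x - dot n z y.
Proof. dot_induction. Qed.
Lemma dot_scal_l n a x z : dot n (vscal a x) z = a * dot n x z.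
Proof. dot_induction. Qed.
Lemma dot_scal_r n a x z : dot n z (vscal a x) = a * dot n z x.
Proof. dot_induction. Qed.
Lemma dot_opp_l n x z : dot n (vopp x) z = - dot n x z.
Proof. dot_induction. Qed.
Lemma dot_opp_r n x z : dot n z (vopp x) = - dot n z x.
Proof. dot_induction. Qed.

Lemma dot_self_nonneg n x : 0 <= dot n x x.
Proof. unfold dot; induction n; simpl; nra. Qed.

Lemma dot_self_expand n x y t :
  dot n (vadd x (vscal t y)) (vadd x (vscal t y))
  = dot n x x + 2 * t * dot n x y + t * t * dot n y y.
Proof. dot_induction. Qed.

Lemma quadratic_nonneg_discr (a b c : R) : 0 <= c ->
  (forall t, 0 <= a + 2 * t * b + t * t * c) -> b * b <= a * c.
Proof.
  intros Hc Hq. destruct (Rle_lt_or_eq_dec 0 c Hc) as [Hc0 | <-].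
  - specialize (Hq (- b / c)).
    replace (a + 2 * (- b / c) * b + (- b / c) * (- b / c) * c) with
      ((a * c - b * b) / c) in Hq by (field; lra).
    apply Rmult_le_compat_r with (r := c) in Hq; [|lra].
    replace ((a * c - b * b) / c * c) with (a * c - b * b) in Hq by (field; lra). lra.
  - destruct (Req_dec b 0) as [-> | Hb]; [lra|].
    specialize (Hq (- (a + 1) / (2 * b))).
    replace (a + 2 * (- (a + 1) / (2 * b)) * b + (- (a + 1) / (2 * b)) * (- (a + 1) / (2 * b)) * 0)
      with (-1) in Hq by (field; lra). lra.
Qed.

Lemma cauchy_schwarz n x y : dot n x y * dot n x y <= dot n x x * dot n y y.
Proof.
  apply quadratic_nonneg_discr; [apply dot_self_nonneg|].
  intros t. rewrite <- dot_self_expand. apply dot_self_nonneg.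
Qed.

Lemma vnorm_nonneg n x : 0 <= vnorm n x.
Proof. apply sqrt_pos. Qed.

Lemma vnorm_sq n x : vnorm n x * vnorm n x = dot n x x.
Proof. apply sqrt_sqrt, dot_self_nonneg. Qed.

Lemma vnorm_pos n x : 0 < dot n x x -> 0 < vnorm n x.
Proof. apply sqrt_lt_R0. Qed.

Lemma vnorm_le n x c : 0 <= c -> dot n x x <= c * c -> vnorm n x <= c.
Proof. intros Hc Hx. rewrite <- (sqrt_square c Hc). apply sqrt_le_1_alt, Hx. Qed.

Lemma abs_dot_le n x y : Rabs (dot n x y) <= vnorm n x * vnorm n y.
Proof.
  pose proof (vnorm_nonneg n x); pose proof (vnorm_nonneg n y).
  rewrite <- (Rabs_right (vnorm n x * vnorm n y)) by nra.
  apply Rsqr_le_abs_0. unfold Rsqr. pose proof (cauchy_schwarz n x y) as CS.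
  rewrite <- (vnorm_sq n x), <- (vnorm_sq n y) in CS. nra.
Qed.

Lemma vnorm_add n x y : vnorm n (vadd x y) <= vnorm n x + vnorm n y.
Proof.
  pose proof (vnorm_nonneg n x); pose proof (vnorm_nonneg n y).
  apply vnorm_le; [lra|].
  replace (vadd x y) with (vadd x (vscal 1 y)) by vector_ext.
  rewrite dot_self_expand, <- (vnorm_sq n x), <- (vnorm_sq n y).
  pose proof (abs_dot_le n x y); pose proof (Rle_abs (dot n x y)). nra.
Qed.

Lemma vnorm_scal n a x : vnorm n (vscal a x) = Rabs a * vnorm n x.
Proof.
  unfold vnorm. rewrite dot_scal_l, dot_scal_r, <- Rmult_assoc, sqrt_mult_alt by nra.
  f_equal. rewrite <- (sqrt_Rsqr_abs a). reflexivity.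
Qed.

Lemma vnorm_le_add_chord n x y : vnorm n x <= vnorm n y + chord n x y.
Proof. unfold chord. replace x with (vadd y (vsub x y)) at 1 by vector_ext. apply vnorm_add. Qed.

Lemma chord_nonneg n x y : 0 <= chord n x y.
Proof. apply vnorm_nonneg. Qed.

Lemma chord_sym n x y : chord n x y = chord n y x.
Proof.
  unfold chord. replace (vsub y x) with (vscal (-1) (vsub x y)) by vector_ext.
  rewrite vnorm_scal, Rabs_left by lra. ring.
Qed.

Lemma chord_triangle n x y z : chord n x z <= chord n x y + chord n y z.
Proof. unfold chord. replace (vsub x z) with (vadd (vsub x y) (vsub y z)) by vector_ext. apply vnorm_add. Qed.

Lemma chord_opp n x y : chord n x (vopp y) = chord n (vopp x) y.
Proof.
  unfold chord. replace (vsub x (vopp y)) with (vscal (-1) (vsub (vopp x) y)) by vector_ext.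
  rewrite vnorm_scal, Rabs_left by lra. ring.
Qed.

Lemma dot_sub_bound n a x y : Rabs (dot n a x - dot n a y) <= vnorm n a * chord n x y.
Proof. rewrite <- dot_sub_r. apply abs_dot_le. Qed.

Lemma sphere_dot_bounds n x y : sphere n x -> sphere n y -> -1 <= dot n x y <= 1.
Proof.
  intros [_ Hx] [_ Hy].
  pose proof (dot_self_nonneg n (vadd x (vscal 1 y))).
  pose proof (dot_self_nonneg n (vadd x (vscal (-1) y))).
  rewrite dot_self_expand in *. lra.
Qed.

Lemma vnorm_sphere n x : sphere n x -> vnorm n x = 1.
Proof. intros [_ H]. unfold vnorm. rewrite H. apply sqrt_1. Qed.

Lemma chord_sq_sphere n x y : sphere n x -> sphere n y ->
  chord n x y * chord n x y = 2 - 2 * dot n x y.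
Proof.
  intros [_ Hx] [_ Hy]. unfold chord. rewrite vnorm_sq.
  replace (vsub x y) with (vadd x (vscal (-1) y)) by vector_ext.
  rewrite dot_self_expand. lra.
Qed.

Lemma chord_le_2 n x y : sphere n x -> sphere n y -> chord n x y <= 2.
Proof.
  intros Hx Hy. pose proof (chord_sq_sphere n x y Hx Hy).
  pose proof (sphere_dot_bounds n x y Hx Hy). pose proof (chord_nonneg n x y). nra.
Qed.

Lemma dot_sphere_lipschitz n a x y : sphere n a -> dot n a x - dot n a y <= chord n x y.
Proof.
  intros Ha. pose proof (dot_sub_bound n a x y) as Hb. rewrite vnorm_sphere in Hb by exact Ha.
  pose proof (Rle_abs (dot n a x - dot n a y)). lra.
Qed.

Lemma dot_self_eq0 n x : dot n x x = 0 -> forall i, (i <= n)%nat -> x i = 0.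
Proof.
  unfold dot. induction n as [|n IH]; simpl; intros H i Hi.
  - replace i with 0%nat by lia. nra.
  - assert (0 <= sum_f_R0 (fun i => x i * x i) n) by apply dot_self_nonneg.
    destruct (Nat.eq_dec i (S n)) as [-> | Hne]; [nra|].
    apply IH; [nra | lia].
Qed.

Lemma sphere_eq_of_dot n x y : sphere n x -> sphere n y -> dot n x y = 1 -> x = y.
Proof.
  intros Hx Hy Hxy. pose proof (chord_sq_sphere n x y Hx Hy) as Hc.
  unfold chord in Hc. rewrite vnorm_sq, Hxy in Hc.
  apply functional_extensionality; intro i.
  destruct (Compare_dec.le_lt_dec i n) as [Hi | Hi].
  - pose proof (dot_self_eq0 n (vsub x y) ltac:(lra) i Hi) as Hxy_i. unfold vsub in Hxy_i. lra.
  - rewrite (proj1 Hx i Hi), (proj1 Hy i Hi). reflexivity.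
Qed.

Lemma sphere_opp n x : sphere n x -> sphere n (vopp x).
Proof.
  intros [Hs H]. split.
  - intros i Hi. unfold vopp. rewrite Hs by exact Hi. ring.
  - rewrite dot_opp_l, dot_opp_r. lra.
Qed.

Lemma supported_lin n a x b y : supported n x -> supported n y -> supported n (lin a x b y).
Proof. intros Hx Hy i Hi. unfold lin. rewrite Hx, Hy by exact Hi. ring. Qed.

Lemma dot_unitv_gt n x k : (n < k)%nat -> dot n x (unitv k) = 0.
Proof.
  unfold dot, unitv. induction n as [|n IH]; cbn -[Nat.eqb]; intros Hk.
  - replace (Nat.eqb 0 k) with false by (symmetry; apply Nat.eqb_neq; lia). ring.
  - rewrite IH by lia. replace (Nat.eqb (S n) k) with false by (symmetry; apply Nat.eqb_neq; lia). ring.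
Qed.

Lemma dot_unitv n x k : (k <= n)%nat -> dot n x (unitv k) = x k.
Proof.
  induction n as [|n IH]; intros Hk.
  - replace k with 0%nat by lia. unfold dot, unitv. simpl. ring.
  - unfold dot; cbn -[Nat.eqb]; fold (dot n x (unitv k)). unfold unitv at 2.
    destruct (Nat.eqb_spec (S n) k) as [<- | Hne].
    + rewrite dot_unitv_gt by lia. ring.
    + rewrite IH by lia. ring.
Qed.

Lemma sphere_unitv n k : (k <= n)%nat -> sphere n (unitv k).
Proof.
  intros Hk. split.
  - intros i Hi. unfold unitv. destruct (Nat.eqb_spec i k); [lia | reflexivity].
  - rewrite dot_unitv by exact Hk. unfold unitv. rewrite Nat.eqb_refl. reflexivity.
Qed.

Lemma sphere_coord_bounds n x i : sphere n x -> -1 <= x i <= 1.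
Proof.
  intros Hx. destruct (Compare_dec.le_lt_dec i n) as [Hi | Hi].
  - rewrite <- (dot_unitv n x i Hi). apply sphere_dot_bounds; [exact Hx | apply sphere_unitv, Hi].
  - rewrite (proj1 Hx i Hi). lra.
Qed.

Lemma normalize_vscal n v : normalize n v = vscal (/ vnorm n v) v.
Proof. apply functional_extensionality; intro. unfold normalize, vscal, vnorm, Rdiv. ring. Qed.

Lemma dot_normalize_r n w v : dot n w (normalize n v) = dot n w v / vnorm n v.
Proof. rewrite normalize_vscal, dot_scal_r. unfold Rdiv. ring. Qed.

Lemma dot_normalize_l n w v : dot n (normalize n v) w = dot n v w / vnorm n v.
Proof. rewrite dot_sym, dot_normalize_r, dot_sym. reflexivity. Qed.

Lemma sphere_normalize n v : supported n v -> 0 < dot n v v -> sphere n (normalize n v).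
Proof.
  intros Hs Hv. pose proof (vnorm_pos n v Hv). split.
  - intros i Hi. unfold normalize. rewrite Hs by exact Hi. unfold Rdiv. ring.
  - rewrite dot_normalize_l, dot_normalize_r, <- vnorm_sq. field. lra.
Qed.

Lemma normalize_sphere n x : sphere n x -> normalize n x = x.
Proof.
  intros [_ H]. apply functional_extensionality; intro. unfold normalize.
  rewrite H, sqrt_1. field.
Qed.

(* Because [normalize n 0] is the zero vector, which is off the sphere. *)
Lemma sphere_normalize_pos n v : sphere n (normalize n v) -> 0 < dot n v v.
Proof.
  intros [_ H]. destruct (dot_self_nonneg n v) as [Hv | Hv]; [exact Hv|].
  rewrite dot_normalize_l, dot_normalize_r, <- Hv in H. unfold Rdiv in H. lra.
Qed.

Lemma chord_normalize n v v' : 0 < dot n v v -> 0 < dot n v' v' ->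
  chord n (normalize n v) (normalize n v') <= 2 * chord n v v' / vnorm n v.
Proof.
  intros Hv Hv'. pose proof (vnorm_pos n v Hv) as HN. pose proof (vnorm_pos n v' Hv').
  rewrite !normalize_vscal. unfold chord.
  replace (vsub (vscal (/ vnorm n v) v) (vscal (/ vnorm n v') v')) with
    (vadd (vscal (/ vnorm n v) (vsub v v'))
          (vscal ((vnorm n v' - vnorm n v) / (vnorm n v * vnorm n v')) v'))
    by (vector_ext; lra).
  eapply Rle_trans; [apply vnorm_add|]. rewrite !vnorm_scal.
  rewrite Rabs_right by (left; apply Rinv_0_lt_compat; lra).
  unfold Rdiv. rewrite Rabs_mult, (Rabs_right (/ (vnorm n v * vnorm n v'))) by
    (left; apply Rinv_0_lt_compat; nra).
  pose proof (vnorm_le_add_chord n v' v) as Hle. pose proof (vnorm_le_add_chord n v v').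
  rewrite chord_sym in Hle. fold (chord n v v') in *.
  assert (Rabs (vnorm n v' - vnorm n v) <= chord n v v') by (apply Rabs_le; lra).
  replace (Rabs (vnorm n v' - vnorm n v) * / (vnorm n v * vnorm n v') * vnorm n v')
    with (Rabs (vnorm n v' - vnorm n v) * / vnorm n v) by (field; lra).
  pose proof (Rinv_0_lt_compat _ HN). nra.
Qed.

Lemma acos_lt_anti x y : -1 <= x -> x < y -> y <= 1 -> acos y < acos x.
Proof.
  intros Hx Hxy Hy. destruct (acos_bound x) as [Hx0 Hx1], (acos_bound y) as [Hy0 Hy1].
  destruct (Rtotal_order (acos y) (acos x)) as [Hlt | [Heq | Hgt]]; [exact Hlt | |].
  - apply (f_equal cos) in Heq. rewrite !cos_acos in Heq by lra. lra.
  - pose proof (cos_decreasing_1 (acos x) (acos y) Hx0 Hx1 Hy0 Hy1 Hgt) as Hcos.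
    rewrite !cos_acos in Hcos by lra. lra.
Qed.

Lemma acos_le_anti x y : -1 <= x -> x <= y -> y <= 1 -> acos y <= acos x.
Proof.
  intros Hx Hxy Hy. destruct (Rle_lt_or_eq_dec x y Hxy) as [Hlt | <-].
  - left. apply acos_lt_anti; assumption.
  - right. reflexivity.
Qed.

Lemma sdist_nonneg n x y : 0 <= sdist n x y.
Proof. apply acos_bound. Qed.

Lemma sdist_self n x : sphere n x -> sdist n x x = 0.
Proof. intros [_ H]. unfold sdist. rewrite H. apply acos_1. Qed.

(* With [th = sdist n x y]: [chord^2 = 2 - 2 cos th = 4 sin^2 (th/2) <= th^2]. *)
Lemma chord_le_sdist n x y : sphere n x -> sphere n y -> chord n x y <= sdist n x y.
Proof.
  intros Hx Hy. pose proof (chord_sq_sphere n x y Hx Hy) as Hc.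
  pose proof (sphere_dot_bounds n x y Hx Hy). pose proof (acos_bound (dot n x y)) as Hth.
  fold (sdist n x y) in Hth. set (th := sdist n x y) in *.
  assert (Hcos : cos (2 * (th / 2)) = dot n x y)
    by (replace (2 * (th / 2)) with th by field; apply cos_acos; lra).
  rewrite cos_2a_sin in Hcos.
  assert (0 <= sin (th / 2)) by (apply sin_ge_0; lra).
  assert (sin (th / 2) <= th / 2).
  { destruct (Req_dec th 0) as [-> | Hth0].
    - unfold Rdiv. rewrite Rmult_0_l, sin_0. lra.
    - left. apply sin_lt_x. lra. }
  pose proof (chord_nonneg n x y). nra.
Qed.

Lemma sdist_lt_of_chord_lt (eps : R) : eps > 0 -> exists delta, delta > 0 /\
  forall n x y, sphere n x -> sphere n y -> chord n x y < delta -> sdist n x y < eps.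
Proof.
  intros He. set (e := Rmin eps PI).
  assert (0 < e) by (apply Rmin_pos; [lra | apply PI_RGT_0]).
  assert (e <= PI) by apply Rmin_r. assert (e <= eps) by apply Rmin_l.
  assert (cos e < 1) by (rewrite <- cos_0; apply cos_decreasing_1; lra).
  exists (sqrt (2 - 2 * cos e)). split; [apply sqrt_lt_R0; lra|].
  intros n x y Hx Hy Hd.
  pose proof (chord_sq_sphere n x y Hx Hy). pose proof (sphere_dot_bounds n x y Hx Hy).
  pose proof (chord_nonneg n x y). pose proof (sqrt_pos (2 - 2 * cos e)).
  pose proof (sqrt_sqrt (2 - 2 * cos e) ltac:(lra)).
  assert (cos e < dot n x y) by nra.
  destruct (COS_bound e). unfold sdist.
  apply Rlt_le_trans with (acos (cos e)); [apply acos_lt_anti; lra|].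
  rewrite acos_cos; lra.
Qed.

(** * Sequential compactness of the sphere *)

Definition strictly_increasing (phi : nat -> nat) : Prop := forall k, (phi k < phi (S k))%nat.

Definition chord_converges (n : nat) (u : nat -> Pt) (l : Pt) : Prop :=
  forall eps, eps > 0 -> exists N, forall k, (N <= k)%nat -> chord n (u k) l < eps.

Lemma strictly_increasing_ge phi : strictly_increasing phi -> forall k, (k <= phi k)%nat.
Proof. intros H k. induction k as [|k IH]; [lia | specialize (H k); lia]. Qed.

Lemma strictly_increasing_mono phi : strictly_increasing phi ->
  forall a b, (a <= b)%nat -> (phi a <= phi b)%nat.
Proof. intros H a b Hab. induction Hab as [|b _ IH]; [lia | specialize (H b); lia]. Qed.

Lemma strictly_increasing_comp phi psi : strictly_increasing phi -> strictly_increasing psi ->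
  strictly_increasing (fun k => phi (psi k)).
Proof.
  intros Hphi Hpsi k.
  pose proof (strictly_increasing_mono phi Hphi (S (psi k)) (psi (S k)) (Hpsi k)).
  specialize (Hphi (psi k)). lia.
Qed.

Lemma inv_succ_lt (eps : R) : eps > 0 -> exists N : nat, / (INR N + 1) < eps.
Proof.
  intros He. destruct (archimed_cor1 eps He) as [N [HN HN0]]. exists N.
  apply lt_INR in HN0. simpl in HN0.
  apply Rle_lt_trans with (/ INR N); [apply Rinv_le_contravar; lra | exact HN].
Qed.

Lemma inv_succ_anti (a b : nat) : (a <= b)%nat -> / (INR b + 1) <= / (INR a + 1).
Proof.
  intros Hab. apply le_INR in Hab. pose proof (pos_INR a).
  apply Rinv_le_contravar; lra.
Qed.

(* The [k]-th index is chosen beyond the previous one, within [1/(k+1)] of the cluster value. *)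
Fixpoint extract (g : nat -> nat -> nat) (k : nat) : nat :=
  match k with O => g O O | S k' => g (S (extract g k')) k end.

Lemma bounded_seq_convergent_subseq (a : nat -> R) : (forall k, -1 <= a k <= 1) ->
  exists phi, strictly_increasing phi /\ exists c,
    forall eps, eps > 0 -> exists N, forall k, (N <= k)%nat -> Rabs (a (phi k) - c) < eps.
Proof.
  intros Ha.
  destruct (Bolzano_Weierstrass a (fun c => -1 <= c <= 1) (compact_P3 (-1) 1) Ha) as [c Hc].
  assert (Hg : forall N j : nat, exists p, (N <= p)%nat /\ Rabs (a p - c) < / (INR j + 1)).
  { intros N j.
    assert (Hj : 0 < / (INR j + 1)) by (apply Rinv_0_lt_compat; pose proof (pos_INR j); lra).
    apply (Hc (disc c (mkposreal _ Hj)) N). exists (mkposreal _ Hj). intros y Hy. exact Hy. }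
  destruct (choice _ (fun N => choice _ (Hg N))) as [g Hgs].
  exists (extract g). split.
  - intros k. simpl. destruct (Hgs (S (extract g k)) (S k)). lia.
  - exists c. intros eps He. destruct (inv_succ_lt eps He) as [N HN]. exists N. intros k Hk.
    assert (Rabs (a (extract g k) - c) < / (INR k + 1)) by (destruct k; apply Hgs).
    pose proof (inv_succ_anti N k Hk). lra.
Qed.

Lemma bounded_seq_coords_convergent_subseq (u : nat -> Pt) : (forall k i, -1 <= u k i <= 1) ->
  forall m, exists phi, strictly_increasing phi /\ exists l : Pt,
    forall eps, eps > 0 -> exists N, forall k, (N <= k)%nat -> forall i, (i < m)%nat ->
      Rabs (u (phi k) i - l i) < eps.
Proof.
  intros Hu m. induction m as [|m [phi [Hphi [l Hl]]]].
  - exists (fun k => k). split; [intros k; lia|].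
    exists (fun _ => 0). intros eps _. exists 0%nat. intros; lia.
  - destruct (bounded_seq_convergent_subseq (fun k => u (phi k) m) (fun k => Hu _ _))
      as [psi [Hpsi [c Hc]]].
    exists (fun k => phi (psi k)). split; [apply strictly_increasing_comp; assumption|].
    exists (fun i => if Nat.eqb i m then c else l i). intros eps He.
    destruct (Hl eps He) as [N1 H1], (Hc eps He) as [N2 H2].
    exists (Nat.max N1 N2). intros k Hk i Hi.
    destruct (Nat.eqb_spec i m) as [-> | Hne].
    + apply H2. lia.
    + pose proof (strictly_increasing_ge psi Hpsi k). apply H1; lia.
Qed.

Lemma chord_le_coordwise n x y e : 0 <= e ->
  (forall i, (i <= n)%nat -> Rabs (x i - y i) <= e) -> chord n x y <= INR (S n) * e.
Proof.
  intros He Hxy. assert (Hn : 1 <= INR (S n)) by (apply (le_INR 1); lia).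
  assert (Hsq : forall i, (i <= n)%nat -> (x i - y i) * (x i - y i) <= e * e).
  { intros i Hi. specialize (Hxy i Hi). unfold Rabs in Hxy.
    destruct (Rcase_abs (x i - y i)); nra. }
  assert (Hsum : forall m, (m <= n)%nat ->
    sum_f_R0 (fun i => (x i - y i) * (x i - y i)) m <= INR (S m) * (e * e)).
  { induction m as [|m IH]; intros Hm; simpl sum_f_R0.
    - simpl. specialize (Hsq 0%nat Hm). lra.
    - rewrite (S_INR (S m)). specialize (Hsq (S m) Hm). specialize (IH ltac:(lia)). lra. }
  apply vnorm_le; [nra|]. specialize (Hsum n (le_n n)). unfold dot, vsub. nra.
Qed.

Lemma chord_converges_sphere n u l : (forall k, sphere n (u k)) -> supported n l ->
  chord_converges n u l -> sphere n l.
Proof.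
  intros Hu Hl Hc. split; [exact Hl|].
  assert (Hnorm : vnorm n l = 1).
  { apply Rle_antisym; apply Rnot_lt_le; intro Hlt.
    - destruct (Hc (vnorm n l - 1) ltac:(lra)) as [N HN]. specialize (HN N (le_n _)).
      pose proof (vnorm_le_add_chord n l (u N)) as Hle.
      rewrite (vnorm_sphere n (u N) (Hu N)), (chord_sym n l) in Hle. lra.
    - destruct (Hc (1 - vnorm n l) ltac:(lra)) as [N HN]. specialize (HN N (le_n _)).
      pose proof (vnorm_le_add_chord n (u N) l) as Hle.
      rewrite (vnorm_sphere n (u N) (Hu N)) in Hle. lra. }
  rewrite <- vnorm_sq, Hnorm. ring.
Qed.

Lemma sphere_seq_convergent_subseq n (u : nat -> Pt) : (forall k, sphere n (u k)) ->
  exists phi, strictly_increasing phi /\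
    exists l, sphere n l /\ chord_converges n (fun k => u (phi k)) l.
Proof.
  intros Hu.
  destruct (bounded_seq_coords_convergent_subseq u
              (fun k i => sphere_coord_bounds n (u k) i (Hu k)) (S n)) as [phi [Hphi [l Hl]]].
  set (l' := fun i => if Nat.leb i n then l i else 0).
  assert (Hconv : chord_converges n (fun k => u (phi k)) l').
  { intros eps He. assert (Hn : 0 < INR (S n)) by (apply lt_0_INR; lia).
    set (e := eps / (INR (S n) + 1)).
    assert (He' : 0 < e) by (apply Rdiv_lt_0_compat; lra).
    destruct (Hl e He') as [N HN]. exists N. intros k Hk.
    apply Rle_lt_trans with (INR (S n) * e).
    - apply chord_le_coordwise; [lra|]. intros i Hi. unfold l'.
      replace (Nat.leb i n) with true by (symmetry; apply Nat.leb_le, Hi).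
      left. apply HN; [exact Hk | lia].
    - unfold e. replace (INR (S n) * (eps / (INR (S n) + 1))) with (eps - e) by (unfold e; field; lra).
      lra. }
  exists phi. split; [exact Hphi|]. exists l'. split; [|exact Hconv].
  apply (chord_converges_sphere n (fun k => u (phi k))); [intros; apply Hu | | exact Hconv].
  intros i Hi. unfold l'. replace (Nat.leb i n) with false by (symmetry; apply Nat.leb_gt, Hi).
  reflexivity.
Qed.

Lemma closed_in_sphere_limit n B u l : closed_in_sphere n B -> (forall k, B (u k)) ->
  (forall k, sphere n (u k)) -> sphere n l -> chord_converges n u l -> B l.
Proof.
  intros Hcl HB Hu Hl Hc. apply Hcl; [exact Hl|]. intros eps He.
  destruct (sdist_lt_of_chord_lt eps He) as [d [Hd Hd']].
  destruct (Hc d Hd) as [N HN]. exists (u N). split; [apply HB|].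
  apply Hd'; [exact Hl | apply Hu |]. rewrite chord_sym. apply HN, le_n.
Qed.

Definition chord_lipschitz (n : nat) (f : Pt -> R) (K : R) : Prop :=
  forall x y, sphere n x -> sphere n y -> f x - f y <= K * chord n x y.

Lemma lipschitz_sup_approx n (B : Pt -> Prop) (f : Pt -> R) (K : R) :
  HS n B -> 0 <= K -> chord_lipschitz n f K ->
  exists s, (forall b, B b -> f b <= s) /\
    exists u, forall k, B (u k) /\ s - / (INR k + 1) < f (u k).
Proof.
  intros [HBs [[b0 Hb0] _]] HK Hf.
  set (E := fun r => exists b, B b /\ r = f b).
  assert (Hbd : bound E).
  { exists (f b0 + K * 2). intros r [b [Hb ->]].
    pose proof (Hf b b0 (HBs b Hb) (HBs b0 Hb0)).
    pose proof (chord_le_2 n b b0 (HBs b Hb) (HBs b0 Hb0)). nra. }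
  destruct (completeness E Hbd (ex_intro _ (f b0) (ex_intro _ b0 (conj Hb0 eq_refl))))
    as [s [Hub Hlub]].
  exists s. split; [intros b Hb; apply Hub; exists b; auto |].
  apply (choice (fun k b => B b /\ s - / (INR k + 1) < f b)). intros k. apply NNPP. intro Hn.
  assert (0 < / (INR k + 1)) by (apply Rinv_0_lt_compat; pose proof (pos_INR k); lra).
  assert (Hk : is_upper_bound E (s - / (INR k + 1))).
  { intros r [b [Hb ->]]. apply Rnot_lt_le. intro. apply Hn. exists b. auto. }
  apply Hlub in Hk. lra.
Qed.

Lemma lipschitz_max_attained n (B : Pt -> Prop) (f : Pt -> R) (K : R) :
  HS n B -> 0 <= K -> chord_lipschitz n f K ->
  exists b, B b /\ forall b', B b' -> f b' <= f b.
Proof.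
  intros HB HK Hf. pose proof HB as [HBs [_ Hcl]].
  destruct (lipschitz_sup_approx n B f K HB HK Hf) as [s [Hub [u Hu]]].
  destruct (sphere_seq_convergent_subseq n u (fun k => HBs _ (proj1 (Hu k))))
    as [phi [Hphi [l [Hl Hconv]]]].
  exists l. split.
  { apply (closed_in_sphere_limit n B (fun k => u (phi k))); auto.
    - intros k. apply Hu.
    - intros k. apply HBs, Hu. }
  assert (Hsl : s <= f l).
  { apply Rle_plus_epsilon. intros eps He.
    destruct (Hconv (eps / 2 / (K + 1))) as [N1 HN1]; [apply Rdiv_lt_0_compat; lra |].
    destruct (inv_succ_lt (eps / 2)) as [N2 HN2]; [lra |].
    set (k := Nat.max N1 N2). specialize (HN1 k ltac:(lia)).
    destruct (Hu (phi k)) as [HBk Hfk].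
    pose proof (Hf (u (phi k)) l (HBs _ HBk) Hl).
    pose proof (inv_succ_anti N2 (phi k)
                  ltac:(pose proof (strictly_increasing_ge phi Hphi k); lia)).
    pose proof (chord_nonneg n (u (phi k)) l).
    assert (K * chord n (u (phi k)) l <= eps / 2).
    { replace (eps / 2) with ((K + 1) * (eps / 2 / (K + 1))) by (field; lra). nra. }
    lra. }
  intros b' Hb'. pose proof (Hub b' Hb'). lra.
Qed.

(** * The Pompeiu-Hausdorff distance *)

Definition max_dot (n : nat) (B : Pt -> Prop) (a : Pt) : R :=
  epsilon (inhabits 0)
    (fun m => (exists b, B b /\ dot n a b = m) /\ forall b, B b -> dot n a b <= m).

Lemma max_dot_spec n B a : sphere n a -> HS n B ->
  (exists b, B b /\ dot n a b = max_dot n B a) /\ forall b, B b -> dot n a b <= max_dot n B a.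
Proof.
  intros Ha HB. unfold max_dot. apply epsilon_spec.
  destruct (lipschitz_max_attained n B (dot n a) 1 HB ltac:(lra)) as [b [Hb Hmax]].
  { intros x y _ _. rewrite Rmult_1_l. apply dot_sphere_lipschitz, Ha. }
  exists (dot n a b). split; [exists b; auto | exact Hmax].
Qed.

Lemma max_dot_bounds n B a : sphere n a -> HS n B -> -1 <= max_dot n B a <= 1.
Proof.
  intros Ha HB. destruct (max_dot_spec n B a Ha HB) as [[b [Hb <-]] _].
  apply sphere_dot_bounds; [exact Ha | apply HB, Hb].
Qed.

Lemma max_dot_lipschitz n B x y : HS n B -> sphere n x -> sphere n y ->
  max_dot n B y - max_dot n B x <= chord n x y.
Proof.
  intros HB Hx Hy. destruct (max_dot_spec n B y Hy HB) as [[b [Hb <-]] _].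
  destruct (max_dot_spec n B x Hx HB) as [_ Hle]. specialize (Hle b Hb).
  pose proof (dot_sphere_lipschitz n b y x (proj1 HB b Hb)) as Lip.
  rewrite (dot_sym n b y), (dot_sym n b x), chord_sym in Lip. lra.
Qed.

Lemma mindist_max_dot n a B : sphere n a -> HS n B -> mindist n a B (acos (max_dot n B a)).
Proof.
  intros Ha HB. destruct (max_dot_spec n B a Ha HB) as [[b [Hb Hbe]] Hall]. split.
  - exists b. split; [exact Hb|]. unfold sdist. rewrite Hbe. reflexivity.
  - intros b' Hb'. unfold sdist. apply acos_le_anti; [| apply Hall, Hb' | apply max_dot_bounds; auto].
    apply sphere_dot_bounds; [exact Ha | apply HB, Hb'].
Qed.

Lemma mindist_unique n a B r r' : mindist n a B r -> mindist n a B r' -> r = r'.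
Proof.
  intros [[b [Hb <-]] H1] [[c [Hc <-]] H2].
  specialize (H1 c Hc). specialize (H2 b Hb). lra.
Qed.

Lemma excess_approx n A B r : HS n A -> HS n B -> excess n A B r ->
  forall a, A a -> exists b, B b /\ sdist n a b <= r.
Proof.
  intros HA HB [_ Hex] a Ha.
  pose proof (mindist_max_dot n a B (proj1 HA a Ha) HB) as Hm.
  specialize (Hex a _ Ha Hm). destruct Hm as [[b [Hb Hbd]] _].
  exists b. rewrite Hbd. auto.
Qed.

Lemma hdist_approx n A B r : HS n A -> HS n B -> hdist n A B r ->
  (forall a, A a -> exists b, B b /\ sdist n a b <= r) /\
  (forall b, B b -> exists a, A a /\ sdist n b a <= r).
Proof.
  intros HA HB [r1 [r2 [E1 [E2 ->]]]]. split.
  - intros a Ha. destruct (excess_approx n A B r1 HA HB E1 a Ha) as [b [Hb Hd]].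
    exists b. split; [exact Hb|]. pose proof (Rmax_l r1 r2). lra.
  - intros b Hb. destruct (excess_approx n B A r2 HB HA E2 b Hb) as [a [Ha Hd]].
    exists a. split; [exact Ha|]. pose proof (Rmax_r r1 r2). lra.
Qed.

Lemma excess_exists n A B d : HS n A -> HS n B ->
  (forall a, A a -> exists b, B b /\ sdist n a b <= d) -> exists r, excess n A B r /\ r <= d.
Proof.
  intros HA HB Hd.
  destruct (lipschitz_max_attained n A (fun a => - max_dot n B a) 1 HA ltac:(lra))
    as [a0 [Ha0 Hmin]].
  { intros x y Hx Hy. pose proof (max_dot_lipschitz n B x y HB Hx Hy). lra. }
  pose proof (proj1 HA) as HAs.
  exists (acos (max_dot n B a0)). split; [split|].
  - exists a0. split; [exact Ha0 | apply mindist_max_dot; auto].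
  - intros a r' Ha Hm.
    rewrite (mindist_unique n a B r' _ Hm (mindist_max_dot n a B (HAs a Ha) HB)).
    specialize (Hmin a Ha).
    apply acos_le_anti; [apply max_dot_bounds; auto | lra | apply max_dot_bounds; auto].
  - destruct (Hd a0 Ha0) as [b [Hb Hbd]].
    destruct (mindist_max_dot n a0 B (HAs a0 Ha0) HB) as [_ Hm].
    specialize (Hm b Hb). lra.
Qed.

Lemma hdist_exists n A B d : HS n A -> HS n B ->
  (forall a, A a -> exists b, B b /\ sdist n a b <= d) ->
  (forall b, B b -> exists a, A a /\ sdist n b a <= d) -> exists r, hdist n A B r /\ r <= d.
Proof.
  intros HA HB H1 H2.
  destruct (excess_exists n A B d HA HB H1) as [r1 [E1 L1]].
  destruct (excess_exists n B A d HB HA H2) as [r2 [E2 L2]].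
  exists (Rmax r1 r2). split; [exists r1, r2; auto | apply Rmax_lub; assumption].
Qed.

Lemma arc_pt_normalize n a b t : arc_pt n a b t = normalize n (lin (1 - t) a t b).
Proof. reflexivity. Qed.

Lemma dot_self_lin_sphere n a b t : sphere n a -> sphere n b ->
  dot n (lin (1 - t) a t b) (lin (1 - t) a t b)
  = (1 - t) * (1 - t) + 2 * t * (1 - t) * dot n a b + t * t.
Proof.
  intros [_ Ha] [_ Hb]. rewrite dot_lin_l, !dot_lin_r, Ha, Hb, (dot_sym n b a). ring.
Qed.

Lemma dot_self_lin_ge n a b t : sphere n a -> sphere n b -> 0 <= t <= 1 ->
  (1 + dot n a b) / 2 <= dot n (lin (1 - t) a t b) (lin (1 - t) a t b).
Proof.
  intros Ha Hb Ht. rewrite dot_self_lin_sphere by assumption.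
  destruct (sphere_dot_bounds n a b Ha Hb).
  assert (0 <= (1 - dot n a b) * ((2 * t - 1) * (2 * t - 1)))
    by (apply Rmult_le_pos; [lra | apply Rle_0_sqr]).
  lra.
Qed.

Lemma dot_self_lin_le n a b t : sphere n a -> sphere n b -> 0 <= t <= 1 ->
  dot n (lin (1 - t) a t b) (lin (1 - t) a t b) <= 1.
Proof.
  intros Ha Hb Ht. rewrite dot_self_lin_sphere by assumption.
  destruct (sphere_dot_bounds n a b Ha Hb).
  assert (0 <= t * (1 - t) * (1 - dot n a b)) by (apply Rmult_le_pos; [apply Rmult_le_pos|]; lra).
  nra.
Qed.

Lemma chord_lin n a b a' b' t : 0 <= t <= 1 ->
  chord n (lin (1 - t) a t b) (lin (1 - t) a' t b') <= (1 - t) * chord n a a' + t * chord n b b'.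
Proof.
  intros Ht. unfold chord.
  replace (vsub (lin (1 - t) a t b) (lin (1 - t) a' t b'))
    with (vadd (vscal (1 - t) (vsub a a')) (vscal t (vsub b b'))) by vector_ext.
  eapply Rle_trans; [apply vnorm_add|]. rewrite !vnorm_scal, !Rabs_right by lra. lra.
Qed.

Lemma sphere_arc_pt n a b t : sphere n a -> sphere n b -> -1 < dot n a b -> 0 <= t <= 1 ->
  sphere n (arc_pt n a b t).
Proof.
  intros Ha Hb Hab Ht. rewrite arc_pt_normalize. apply sphere_normalize.
  - apply supported_lin; [exact (proj1 Ha) | exact (proj1 Hb)].
  - pose proof (dot_self_lin_ge n a b t Ha Hb Ht). lra.
Qed.

Lemma chord_arc_pt n a b a' b' t r : sphere n a -> sphere n b -> -1 < dot n a b -> 0 <= t <= 1 ->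
  sphere n (arc_pt n a' b' t) -> chord n a a' <= r -> chord n b b' <= r ->
  chord n (arc_pt n a b t) (arc_pt n a' b' t) <= 2 * r / sqrt ((1 + dot n a b) / 2).
Proof.
  intros Ha Hb Hab Ht Harc' Hra Hrb. rewrite !arc_pt_normalize in *.
  pose proof (dot_self_lin_ge n a b t Ha Hb Ht) as Hlow.
  assert (Hc : 0 < sqrt ((1 + dot n a b) / 2)) by (apply sqrt_lt_R0; lra).
  assert (Hcv : sqrt ((1 + dot n a b) / 2) <= vnorm n (lin (1 - t) a t b))
    by (apply sqrt_le_1_alt, Hlow).
  eapply Rle_trans; [apply chord_normalize; [lra | apply sphere_normalize_pos, Harc']|].
  pose proof (chord_lin n a b a' b' t Ht). pose proof (chord_nonneg n (lin (1 - t) a t b) (lin (1 - t) a' t b')).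
  unfold Rdiv. apply Rmult_le_compat; [lra | left; apply Rinv_0_lt_compat; lra | nra |].
  apply Rinv_le_contravar; assumption.
Qed.

Lemma hclosure_sconv_HS n W : hclosure n (Hsconv n) W -> HS n W.
Proof. intros [H _]. exact H. Qed.

Lemma hclosure_sconv_arc n W a b t : hclosure n (Hsconv n) W -> W a -> W b ->
  -1 < dot n a b -> 0 <= t <= 1 -> W (arc_pt n a b t).
Proof.
  intros HW Ha Hb Hab Ht.
  pose proof (hclosure_sconv_HS n W HW) as HSW. pose proof HSW as [HWs [_ HWcl]].
  pose proof (HWs a Ha) as Sa. pose proof (HWs b Hb) as Sb.
  pose proof (sphere_arc_pt n a b t Sa Sb Hab Ht) as Sm.
  set (c := sqrt ((1 + dot n a b) / 2)).
  assert (Hc : 0 < c) by (apply sqrt_lt_R0; lra).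
  apply HWcl; [exact Sm|]. intros eps He.
  destruct (sdist_lt_of_chord_lt eps He) as [d [Hd Hd']].
  set (rho := d / (2 / c + 2)).
  assert (H2c : 0 < 2 / c) by (apply Rdiv_lt_0_compat; lra).
  assert (Hrho : 0 < rho) by (apply Rdiv_lt_0_compat; lra).
  destruct HW as [_ HWapprox].
  destruct (HWapprox rho Hrho) as [V [r [[HSV [_ HVconv]] [Hh Hr]]]].
  destruct (hdist_approx n W V r HSW HSV Hh) as [HWV HVW].
  destruct (HWV a Ha) as [a' [Ha' Hda]], (HWV b Hb) as [b' [Hb' Hdb]].
  pose proof (HVconv a' b' t Ha' Hb' Ht) as Hm'.
  destruct (HVW _ Hm') as [y [Hy Hdy]].
  destruct HSV as [HVs _].
  pose proof (HVs _ Hm') as Sm'. pose proof (HVs _ Ha') as Sa'. pose proof (HVs _ Hb') as Sb'.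
  exists y. split; [exact Hy|]. apply Hd'; [exact Sm | apply HWs, Hy |].
  pose proof (chord_le_sdist n a a' Sa Sa') as Ca.
  pose proof (chord_le_sdist n b b' Sb Sb') as Cb.
  pose proof (chord_le_sdist n _ y Sm' (HWs y Hy)) as Cy.
  pose proof (chord_arc_pt n a b a' b' t r Sa Sb Hab Ht Sm' ltac:(lra) ltac:(lra)) as Carc.
  pose proof (chord_triangle n (arc_pt n a b t) (arc_pt n a' b' t) y) as Ctri.
  fold c in Carc.
  assert (r * (2 / c + 2) < d).
  { unfold rho in Hr. apply Rmult_lt_compat_r with (r := 2 / c + 2) in Hr; [|lra].
    replace (d / (2 / c + 2) * (2 / c + 2)) with d in Hr by (field; lra). exact Hr. }
  assert (0 <= r) by (pose proof (chord_nonneg n a a'); lra).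
  replace (2 * r / c) with (r * (2 / c)) in Carc by (field; lra). nra.
Qed.

Lemma sconv_has_point_far_from_antipodes n V : Hsconv n V ->
  exists c, V c /\ forall d, V d -> 1 / 2 < chord n c (vopp d).
Proof.
  intros [[HVs [[q0 Hq0] _]] [[P [SP HP]] HVconv]].
  assert (HPneg : forall Q, V Q -> dot n P Q < 0).
  { intros Q HQ. apply Rnot_le_lt. intro. apply (HP Q HQ). split; [apply HVs, HQ | lra]. }
  set (E := fun z => exists Q, V Q /\ z = - dot n P Q).
  assert (Hbd : bound E).
  { exists 1. intros z [Q [HQ ->]]. destruct (sphere_dot_bounds n P Q SP (HVs Q HQ)). lra. }
  destruct (completeness E Hbd (ex_intro _ _ (ex_intro _ q0 (conj Hq0 eq_refl)))) as [s [Hub Hlub]].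
  assert (Hs : 0 < s).
  { pose proof (Hub _ (ex_intro _ q0 (conj Hq0 eq_refl))). pose proof (HPneg q0 Hq0). lra. }
  assert (Hc : exists c, V c /\ s / 2 < - dot n P c).
  { apply NNPP. intro Hn.
    assert (Hhalf : is_upper_bound E (s / 2)).
    { intros z [Q [HQ ->]]. apply Rnot_lt_le. intro. apply Hn. exists Q. auto. }
    apply Hlub in Hhalf. lra. }
  destruct Hc as [c [Hc Hcs]]. exists c. split; [exact Hc|]. intros d Hd.
  pose proof (HVconv c d (1 / 2) Hc Hd ltac:(lra)) as Hm.
  pose proof (sphere_normalize_pos n (lin (1 - 1 / 2) c (1 / 2) d) (HVs _ Hm)) as Hpos.
  pose proof (vnorm_pos n _ Hpos) as HN.
  assert (HNc : vnorm n (lin (1 - 1 / 2) c (1 / 2) d) = 1 / 2 * chord n c (vopp d)).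
  { unfold chord. replace (vsub c (vopp d)) with (vscal 2 (lin (1 - 1 / 2) c (1 / 2) d))
      by vector_ext.
    rewrite vnorm_scal, Rabs_right by lra. field. }
  pose proof (Hub _ (ex_intro _ _ (conj Hm eq_refl))) as Hms.
  rewrite arc_pt_normalize, dot_normalize_r, dot_lin_r in Hms.
  set (N := vnorm n (lin (1 - 1 / 2) c (1 / 2) d)) in *.
  assert (- ((1 - 1 / 2) * dot n P c + 1 / 2 * dot n P d) <= s * N).
  { apply Rmult_le_compat_r with (r := N) in Hms; [|lra].
    replace (- (((1 - 1 / 2) * dot n P c + 1 / 2 * dot n P d) / N) * N)
      with (- ((1 - 1 / 2) * dot n P c + 1 / 2 * dot n P d)) in Hms by (field; lra).
    exact Hms. }
  pose proof (HPneg d Hd). nra.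
Qed.

Lemma hclosure_sconv_not_symmetric n W : hclosure n (Hsconv n) W ->
  exists v, W v /\ ~ W (vopp v).
Proof.
  intros HW. apply NNPP. intro Hn.
  assert (Hsym : forall v, W v -> W (vopp v)).
  { intros v Hv. apply NNPP. intro. apply Hn. exists v. auto. }
  pose proof (hclosure_sconv_HS n W HW) as HSW. pose proof HSW as [HWs _].
  destruct HW as [_ HWapprox].
  destruct (HWapprox (1 / 4) ltac:(lra)) as [V [r [HV [Hh Hr]]]].
  pose proof (proj1 HV) as HSV. pose proof HSV as [HVs _].
  destruct (hdist_approx n W V r HSW HSV Hh) as [HWV HVW].
  destruct (sconv_has_point_far_from_antipodes n V HV) as [c [Hc Hfar]].
  destruct (HVW c Hc) as [w [Hw Hcw]].
  destruct (HWV (vopp w) (Hsym w Hw)) as [d [Hd Hwd]].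
  pose proof (chord_le_sdist n c w (HVs c Hc) (HWs w Hw)) as Ccw.
  pose proof (chord_le_sdist n (vopp w) d (sphere_opp n w (HWs w Hw)) (HVs d Hd)) as Cwd.
  pose proof (chord_triangle n c w (vopp d)) as Ctri. rewrite (chord_opp n w d) in Ctri.
  specialize (Hfar d Hd). lra.
Qed.

(** * Separation from arc-convex closed sets *)

Definition arc_convex (n : nat) (W : Pt -> Prop) : Prop :=
  forall a b t, W a -> W b -> -1 < dot n a b -> 0 <= t <= 1 -> W (arc_pt n a b t).

Lemma hclosure_sconv_arc_convex n W : hclosure n (Hsconv n) W -> arc_convex n W.
Proof. intros HW a b t. apply hclosure_sconv_arc, HW. Qed.

(* With [D^2 = |(1-t) w + t P|^2], the inequality [c D < (1-t) c + t px] for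
   [t = c a / 4] is the first-order gain [2 t c a] beating the second-order loss. *)
Lemma small_step_ineq (c px s : R) : 0 < c <= 1 -> -1 <= s <= 1 -> -1 <= px <= 1 ->
  0 < px - c * s ->
  let t := c * (px - c * s) / 4 in
  c * c * ((1 - t) * (1 - t) + 2 * t * (1 - t) * s + t * t)
    < ((1 - t) * c + t * px) * ((1 - t) * c + t * px) /\
  0 <= (1 - t) * c + t * px.
Proof.
  intros Hc Hs Hp Ha t. set (a := px - c * s) in *.
  assert (Hid : ((1 - t) * c + t * px) * ((1 - t) * c + t * px)
                - c * c * ((1 - t) * (1 - t) + 2 * t * (1 - t) * s + t * t)
              = 2 * t * c * a + t * t * ((px - c) * (px - c) - 2 * c * c * (1 - s)))
    by (unfold a; ring).
  assert (Ht0 : 0 < t) by (unfold t; apply Rmult_lt_0_compat; [nra | lra]).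
  assert (Ha2 : a <= 2) by (unfold a; nra).
  assert (Hb : -4 <= (px - c) * (px - c) - 2 * c * c * (1 - s)) by nra.
  split.
  - assert (0 < 2 * t * c * a - 4 * t * t).
    { replace (2 * t * c * a - 4 * t * t) with (2 * t * (c * a - 2 * t)) by ring.
      apply Rmult_lt_0_compat; [lra | unfold t; nra]. }
    assert (t * t * (-4) <= t * t * ((px - c) * (px - c) - 2 * c * c * (1 - s)))
      by (apply Rmult_le_compat_l; nra).
    lra.
  - assert (t <= c / 2) by (unfold t; nra).
    assert (0 <= t * (px - c + 2)) by (apply Rmult_le_pos; lra).
    nra.
Qed.

Lemma arc_pt_increases_dot n x w P : sphere n x -> sphere n w -> sphere n P ->
  0 < dot n x w -> -1 < dot n w P -> dot n x w * dot n w P < dot n x P ->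
  exists t, 0 <= t <= 1 /\ dot n x w < dot n x (arc_pt n w P t).
Proof.
  intros Sx Sw SP Hc HwP Hgain.
  pose proof (sphere_dot_bounds n x w Sx Sw). pose proof (sphere_dot_bounds n w P Sw SP).
  pose proof (sphere_dot_bounds n x P Sx SP).
  set (c := dot n x w) in *. set (s := dot n w P) in *. set (px := dot n x P) in *.
  destruct (small_step_ineq c px s ltac:(lra) ltac:(lra) ltac:(lra) ltac:(lra)) as [K1 K2].
  set (t := c * (px - c * s) / 4) in *.
  assert (Ht : 0 <= t <= 1).
  { unfold t. split; [apply Rmult_le_pos; nra | nra]. }
  exists t. split; [exact Ht|].
  rewrite arc_pt_normalize, dot_normalize_r, dot_lin_r. fold c px.
  pose proof (dot_self_lin_sphere n w P t Sw SP) as HD2.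
  pose proof (dot_self_lin_ge n w P t Sw SP Ht) as Hlow.
  pose proof (vnorm_nonneg n (lin (1 - t) w t P)) as HD.
  rewrite <- vnorm_sq in HD2, Hlow. fold s in HD2, Hlow. rewrite <- HD2 in K1.
  set (D := vnorm n (lin (1 - t) w t P)) in *.
  assert (HD0 : 0 < D) by nra.
  apply Rmult_lt_reg_r with D; [exact HD0|].
  replace (((1 - t) * c + t * px) / D * D) with ((1 - t) * c + t * px) by (field; lra).
  nra.
Qed.

Lemma maximizer_supports n W x w : arc_convex n W -> (forall y, W y -> sphere n y) ->
  sphere n x -> W w -> (forall P, W P -> dot n x P <= dot n x w) -> 0 < dot n x w ->
  forall P, W P -> dot n x P <= dot n x w * dot n w P.
Proof.
  intros Hconv HWs Sx Hw Hmax Hc P HP. apply Rnot_lt_le. intro Hgain.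
  pose proof (HWs w Hw) as Sw. pose proof (HWs P HP) as SP.
  destruct (Rle_lt_or_eq_dec (-1) (dot n w P) (proj1 (sphere_dot_bounds n w P Sw SP)))
    as [Hlt | Heq].
  - destruct (arc_pt_increases_dot n x w P Sx Sw SP Hc Hlt Hgain) as [t [Ht Hinc]].
    specialize (Hmax _ (Hconv w P t Hw HP Hlt Ht)). lra.
  - assert (P = vopp w).
    { apply (sphere_eq_of_dot n); [exact SP | apply sphere_opp, Sw |].
      rewrite dot_opp_r, dot_sym. lra. }
    subst P. rewrite !dot_opp_r, (proj2 Sw) in Hgain. lra.
Qed.

Lemma arc_convex_separation n W x : HS n W -> arc_convex n W -> sphere n x -> ~ W x ->
  exists q, polar n W q /\ dot n q x < 0.
Proof.
  intros HW Hconv Sx Hx. pose proof HW as [HWs _].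
  destruct (lipschitz_max_attained n W (dot n x) 1 HW ltac:(lra)) as [w [Hw Hmax]].
  { intros y z _ _. rewrite Rmult_1_l. apply dot_sphere_lipschitz, Sx. }
  pose proof (HWs w Hw) as Sw.
  destruct (Rle_lt_dec (dot n x w) 0) as [Hc | Hc].
  - exists (vopp x). split; [split; [apply sphere_opp, Sx |] |].
    + intros P HP. rewrite dot_opp_r, dot_sym. specialize (Hmax P HP). lra.
    + rewrite dot_opp_l, (proj2 Sx). lra.
  - assert (Hc1 : dot n x w < 1).
    { destruct (sphere_dot_bounds n x w Sx Sw) as [_ [Hlt | Heq]]; [exact Hlt |].
      exfalso. apply Hx. rewrite (sphere_eq_of_dot n x w Sx Sw Heq). exact Hw. }
    set (q := lin (dot n x w) w (-1) x).
    assert (Hqq : dot n q q = 1 - dot n x w * dot n x w).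
    { unfold q. rewrite dot_lin_l, !dot_lin_r, (proj2 Sx), (proj2 Sw), (dot_sym n w x). ring. }
    assert (Hq : 0 < vnorm n q) by (apply vnorm_pos; nra).
    pose proof (Rinv_0_lt_compat _ Hq) as Hq'.
    exists (normalize n q). split; [split |].
    + apply sphere_normalize; [apply supported_lin; [exact (proj1 Sw) | exact (proj1 Sx)] | nra].
    + intros P HP. rewrite dot_normalize_r.
      replace (dot n P q) with (dot n x w * dot n w P - dot n x P)
        by (unfold q; rewrite dot_lin_r, (dot_sym n P w), (dot_sym n P x); ring).
      pose proof (maximizer_supports n W x w Hconv HWs Sx Hw Hmax Hc P HP).
      apply Rle_ge. unfold Rdiv. apply Rmult_le_pos; lra.
    + rewrite dot_normalize_l.
      replace (dot n q x) with (dot n x w * dot n x w - 1)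
        by (unfold q; rewrite dot_lin_l, (proj2 Sx), (dot_sym n w x); ring).
      assert (dot n x w * dot n x w - 1 < 0) by nra.
      unfold Rdiv. nra.
Qed.

Lemma polar_closed n V : (forall P, V P -> sphere n P) -> closed_in_sphere n (polar n V).
Proof.
  intros HV x Sx Hap. split; [exact Sx |]. intros P HP. apply Rle_ge, Rnot_lt_le. intro Hneg.
  destruct (Hap (- dot n P x) ltac:(lra)) as [y [[Sy Hy] Hd]].
  pose proof (chord_le_sdist n x y Sx Sy) as Cxy.
  pose proof (dot_sphere_lipschitz n P y x (HV P HP)) as Lip. rewrite chord_sym in Lip.
  specialize (Hy P HP). lra.
Qed.

Lemma polar_normalize_lin n W a y b z : polar n W y -> polar n W z -> 0 <= a -> 0 <= b ->
  0 < dot n (lin a y b z) (lin a y b z) -> polar n W (normalize n (lin a y b z)).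
Proof.
  intros [Sy Hy] [Sz Hz] Ha Hb Hpos. pose proof (vnorm_pos n _ Hpos) as HN.
  split; [apply sphere_normalize; [apply supported_lin; [exact (proj1 Sy) | exact (proj1 Sz)] | exact Hpos] |].
  intros P HP. specialize (Hy P HP). specialize (Hz P HP).
  rewrite dot_normalize_r, dot_lin_r. apply Rle_ge. unfold Rdiv.
  apply Rmult_le_pos; [nra | left; apply Rinv_0_lt_compat, HN].
Qed.

Lemma hclosure_sconv_polar_nonempty n W : hclosure n (Hsconv n) W -> exists Q, polar n W Q.
Proof.
  intros HW. destruct (hclosure_sconv_not_symmetric n W HW) as [v [Hv Hnv]].
  pose proof (hclosure_sconv_HS n W HW) as HSW.
  destruct (arc_convex_separation n W (vopp v) HSW (hclosure_sconv_arc_convex n W HW)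
              (sphere_opp n v (proj1 HSW v Hv)) Hnv) as [q [Hq _]].
  exists q. exact Hq.
Qed.

Lemma hclosure_sconv_bipolar n W : hclosure n (Hsconv n) W -> W = polar n (polar n W).
Proof.
  intros HW. pose proof (hclosure_sconv_HS n W HW) as HSW.
  apply functional_extensionality. intro x. apply propositional_extensionality. split.
  - intros Hx. split; [apply HSW, Hx |]. intros P [_ HP]. rewrite dot_sym. apply HP, Hx.
  - intros [Sx Hx]. apply NNPP. intro Hn.
    destruct (arc_convex_separation n W x HSW (hclosure_sconv_arc_convex n W HW) Sx Hn)
      as [q [Hq Hqx]].
    specialize (Hx q Hq). lra.
Qed.

Definition polar_cap (n : nat) (W : Pt -> Prop) (v : Pt) (del : R) (z : Pt) : Prop :=
  polar n W z /\ dot n v z >= del.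

Lemma polar_cap_HS n W v del : (forall P, W P -> sphere n P) -> sphere n v ->
  (exists z, polar_cap n W v del z) -> HS n (polar_cap n W v del).
Proof.
  intros HWs Sv Hne. split; [intros z [[Sz _] _]; exact Sz |]. split; [exact Hne |].
  intros x Sx Hap. split.
  - apply polar_closed; [exact HWs | exact Sx |]. intros e He.
    destruct (Hap e He) as [y [[Hy _] Hxy]]. exists y. auto.
  - apply Rle_ge, Rnot_lt_le. intro Hlt.
    destruct (Hap (del - dot n v x) ltac:(lra)) as [y [[[Sy _] Hy] Hxy]].
    pose proof (chord_le_sdist n x y Sx Sy) as Cxy.
    pose proof (dot_sphere_lipschitz n v y x Sv) as Lip. rewrite chord_sym in Lip. lra.
Qed.

Lemma polar_cap_s_convex n W v del : sphere n v -> 0 < del -> s_convex n (polar_cap n W v del).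
Proof.
  intros Sv Hdel. split.
  - exists (vopp v). split; [apply sphere_opp, Sv |].
    intros Q [_ HQ] [_ HH]. rewrite dot_opp_l in HH. lra.
  - intros A B t [[SA HA] HvA] [[SB HB] HvB] Ht. rewrite arc_pt_normalize.
    set (m := lin (1 - t) A t B).
    assert (Hvm : dot n v m >= del) by (unfold m; rewrite dot_lin_r; nra).
    assert (Hpos : 0 < dot n m m).
    { pose proof (cauchy_schwarz n v m) as CS. rewrite (proj2 Sv) in CS. nra. }
    pose proof (vnorm_pos n m Hpos) as HN.
    assert (HN1 : vnorm n m <= 1)
      by (apply vnorm_le; [lra | rewrite Rmult_1_r; apply dot_self_lin_le; assumption]).
    split.
    + apply polar_normalize_lin; [split; assumption | split; assumption | lra | lra | exact Hpos].
    + rewrite dot_normalize_r. apply Rle_ge.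
      apply Rmult_le_reg_r with (vnorm n m); [exact HN |].
      replace (dot n v m / vnorm n m * vnorm n m) with (dot n v m) by (field; lra). nra.
Qed.

Lemma polar_shift_into_cap n W v u y s : W v -> polar n W u -> polar n W y ->
  0 <= dot n v u -> 0 < s <= 1 / 2 ->
  exists z, polar_cap n W v (s * dot n v u / 2) z /\ chord n y z <= 2 * s.
Proof.
  intros Hv Hu Hy Hk Hs. pose proof (proj1 Hu) as Su. pose proof (proj1 Hy) as Sy.
  set (m := lin 1 y s u).
  assert (Hym : chord n y m = s).
  { unfold chord, m. replace (vsub y (lin 1 y s u)) with (vscal (- s) u) by vector_ext.
    rewrite vnorm_scal, vnorm_sphere, Rabs_left by (assumption || lra). ring. }
  pose proof (vnorm_le_add_chord n y m) as Hlow. rewrite vnorm_sphere, Hym in Hlow by exact Sy.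
  assert (Hup : vnorm n m <= 1 + s).
  { unfold m. replace (lin 1 y s u) with (vadd y (vscal s u)) by vector_ext.
    eapply Rle_trans; [apply vnorm_add |].
    rewrite vnorm_scal, !vnorm_sphere, Rabs_right by (assumption || lra). lra. }
  assert (Hpos : 0 < dot n m m) by (rewrite <- vnorm_sq; nra).
  exists (normalize n m). split; [split |].
  - apply polar_normalize_lin; [exact Hy | exact Hu | lra | lra | exact Hpos].
  - assert (0 <= dot n v y) by (destruct Hy as [_ Hy]; apply Rge_le, Hy, Hv).
    rewrite dot_normalize_r. unfold m. rewrite dot_lin_r. fold m.
    apply Rle_ge. apply Rmult_le_reg_r with (vnorm n m); [lra |].
    replace ((1 * dot n v y + s * dot n v u) / vnorm n m * vnorm n m)
      with (1 * dot n v y + s * dot n v u) by (field; lra).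
    assert (0 <= s * dot n v u) by nra.
    assert (s * dot n v u * vnorm n m <= s * dot n v u * (3 / 2))
      by (apply Rmult_le_compat_l; lra).
    lra.
  - rewrite <- (normalize_sphere n y Sy) at 1.
    eapply Rle_trans; [apply chord_normalize; [rewrite (proj2 Sy); lra | exact Hpos] |].
    rewrite vnorm_sphere, Hym by exact Sy. lra.
Qed.

Lemma hclosure_sconv_polar n W : hclosure n (Hsconv n) W -> hclosure n (Hsconv n) (polar n W).
Proof.
  intros HW. pose proof (hclosure_sconv_HS n W HW) as HSW. pose proof HSW as [HWs _].
  assert (HSp : HS n (polar n W)).
  { split; [intros x [Sx _]; exact Sx |].
    split; [apply hclosure_sconv_polar_nonempty, HW | apply polar_closed, HWs]. }
  split; [exact HSp |].
  destruct (hclosure_sconv_not_symmetric n W HW) as [v [Hv Hnv]].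
  pose proof (HWs v Hv) as Sv.
  destruct (arc_convex_separation n W (vopp v) HSW (hclosure_sconv_arc_convex n W HW)
              (sphere_opp n v Sv) Hnv) as [u [Hu Huv]].
  rewrite dot_opp_r, dot_sym in Huv.
  intros eps He.
  destruct (sdist_lt_of_chord_lt (eps / 2) ltac:(lra)) as [d [Hd Hd']].
  set (s := Rmin (1 / 2) (d / 4)).
  assert (Hs : 0 < s) by (apply Rmin_pos; lra).
  assert (Hs1 : s <= 1 / 2) by apply Rmin_l. assert (Hs2 : s <= d / 4) by apply Rmin_r.
  set (del := s * dot n v u / 2).
  assert (HsWd : Hsconv n (polar_cap n W v del)).
  { split.
    - apply polar_cap_HS; [exact HWs | exact Sv |].
      exists u. split; [exact Hu | unfold del; nra].
    - apply polar_cap_s_convex; [exact Sv | unfold del; nra]. }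
  destruct (hdist_exists n (polar n W) (polar_cap n W v del) (eps / 2) HSp (proj1 HsWd))
    as [r [Hh Hr]].
  - intros y Hy.
    destruct (polar_shift_into_cap n W v u y s Hv Hu Hy ltac:(lra) ltac:(lra)) as [z [Hz Hyz]].
    exists z. split; [exact Hz |]. left.
    apply Hd'; [exact (proj1 Hy) | exact (proj1 (proj1 Hz)) | lra].
  - intros z [Hz _]. exists z. split; [exact Hz |]. rewrite sdist_self by exact (proj1 Hz). lra.
  - exists (polar_cap n W v del), r. split; [exact HsWd | split; [exact Hh | lra]].
Qed.

Lemma singleton_Hsconv n a : sphere n a -> Hsconv n (fun x => x = a).
Proof.
  intros Sa. split; [split; [| split] | split].
  - intros x ->. exact Sa.
  - exists a. reflexivity.
  - intros x Sx Hap. apply (sphere_eq_of_dot n x a Sx Sa).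
    assert (Hd : sdist n x a = 0).
    { apply Rle_antisym; [| apply sdist_nonneg]. apply Rnot_lt_le. intro Hpos.
      destruct (Hap _ Hpos) as [y [-> Hy]]. lra. }
    unfold sdist in Hd. rewrite <- (cos_acos (dot n x a)) by (apply sphere_dot_bounds; assumption).
    rewrite Hd. apply cos_0.
  - exists (vopp a). split; [apply sphere_opp, Sa |].
    intros Q -> [_ HH]. rewrite dot_opp_l, (proj2 Sa) in HH. lra.
  - intros A B t -> -> _. rewrite arc_pt_normalize.
    replace (lin (1 - t) a t a) with a by vector_ext. apply normalize_sphere, Sa.
Qed.

Lemma hemisphere_not_hemispherical n a b : sphere n a -> sphere n b -> dot n a b = 0 ->
  ~ hemispherical n (polar n (fun x => x = a)).
Proof.
  intros Sa Sb Hab [P [SP HP]].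
  destruct (Rle_lt_or_eq_dec (-1) (dot n P a) (proj1 (sphere_dot_bounds n P a SP Sa)))
    as [Hlt | Heq].
  - set (m := lin 1 a 1 P).
    assert (Hm : dot n m m = 2 + 2 * dot n P a).
    { unfold m. rewrite dot_lin_l, !dot_lin_r, (proj2 Sa), (proj2 SP), (dot_sym n a P). ring. }
    assert (Hpos : 0 < dot n m m) by lra. pose proof (vnorm_pos n m Hpos) as HN.
    assert (Sm : sphere n (normalize n m))
      by (apply sphere_normalize; [apply supported_lin; [exact (proj1 Sa) | exact (proj1 SP)] | exact Hpos]).
    apply (HP (normalize n m)).
    + split; [exact Sm |]. intros x ->. rewrite dot_normalize_r. unfold m.
      rewrite dot_lin_r, (proj2 Sa), (dot_sym n a P). apply Rle_ge.
      unfold Rdiv. apply Rmult_le_pos; [lra | left; apply Rinv_0_lt_compat, HN].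
    + split; [exact Sm |]. rewrite dot_normalize_r. unfold m.
      rewrite dot_lin_r, (proj2 SP). apply Rle_ge.
      unfold Rdiv. apply Rmult_le_pos; [lra | left; apply Rinv_0_lt_compat, HN].
  - assert (HPa : P = vopp a).
    { apply (sphere_eq_of_dot n); [exact SP | apply sphere_opp, Sa |].
      rewrite dot_opp_r. lra. }
    subst P. apply (HP b).
    + split; [exact Sb |]. intros x ->. rewrite Hab. lra.
    + split; [exact Sb |]. rewrite dot_opp_l, Hab. lra.
Qed.

Lemma polar_image_not_sconv n : (1 <= n)%nat ->
  exists W, ~ (polar_image n (Hsconv n) W <-> Hsconv n W).
Proof.
  intros Hn. pose proof (sphere_unitv n 0 ltac:(lia)) as S0.
  pose proof (sphere_unitv n 1 Hn) as S1.
  exists (polar n (fun x => x = unitv 0)). intros [Himage _].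
  destruct (Himage (ex_intro _ _ (conj (singleton_Hsconv n _ S0) eq_refl))) as [_ [Hhemi _]].
  apply (hemisphere_not_hemispherical n (unitv 0) (unitv 1) S0 S1); [| exact Hhemi].
  rewrite dot_unitv by exact Hn. reflexivity.
Qed.

Theorem proposition2 (n : nat) (hn : (1 <= n)%nat) :
  (* (5) *)
  (forall W, hclosure n (Hsconv n) W -> Hcirc n W) /\
  (* (6) *)
  (exists W, ~ (polar_image n (Hsconv n) W <-> Hsconv n W)) /\
  (* (7) *)
  (forall W, polar_image n (hclosure n (Hsconv n)) W <-> hclosure n (Hsconv n) W) /\
  (* (8) *)
  (forall V1 V2, hclosure n (Hsconv n) V1 -> hclosure n (Hsconv n) V2 ->
     polar n V1 = polar n V2 -> V1 = V2).
Proof.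
  split; [| split; [| split]].
  - intros W HW. exact (conj (hclosure_sconv_HS n W HW) (hclosure_sconv_polar_nonempty n W HW)).
  - exact (polar_image_not_sconv n hn).
  - intros W. split.
    + intros [V [HV ->]]. exact (hclosure_sconv_polar n V HV).
    + intros HW. exists (polar n W).
      exact (conj (hclosure_sconv_polar n W HW) (hclosure_sconv_bipolar n W HW)).
  - intros V1 V2 H1 H2 Heq.
    rewrite (hclosure_sconv_bipolar n V1 H1), (hclosure_sconv_bipolar n V2 H2), Heq.
    reflexivity.
Qed.
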